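(* Let $\zeta\equiv\Phi$ or $\zeta\equiv1$, $t\ge0$, $n\in\mathbb N^*$, and $(x_1,\dots,x_n)\in\Delta_{(n)}\cap((0,t]\times\mathbb{R}_+)^n$, $x_i=(t_i,\theta_i)$. Then $$c_n^{\zeta,t}(x_1,\dots,x_n)=c_n^{\zeta,t}(x_1,\dots,x_n)\,\mathbf 1_{\{\theta_1\le\mu\}}\prod_{i=2}^n\mathbf 1_{\{\theta_i\le\mu+\sum_{j=1}^{i-1}\Phi(t_i-t_j)\}}.$$
   Context: Let $\mu>0$ and $\Phi:\mathbb{R}_+\to\mathbb{R}_+$ integrable with $\int_0^\infty\Phi<1$. Let $\mathbb X=\mathbb{R}_+\times\mathbb{R}_+$, points $x=(t,\theta)$, and $\Delta_{(n)}:=\{((t_1,\theta_1),\dots,(t_n,\theta_n))\in\mathbb X^n: t_1<\dots<t_n\}$. Let $\Omega$ be the space of configurations $\omega=\sum_i\delta_{x_i}$ on $\mathbb X$ with $\mathbb P$ the Poisson measure making the canonical measure $N(\omega)=\omega$ a Poisson random measure of intensity $dt\,d\theta$. Let $\lambda$ be the unique pathwise solution of $\lambda_t=\mu+\int_{(0,t)\times\mathbb{R}_+}\Phi(t-s)\mathbf 1_{\{\theta\le\lambda_s\}}N(ds,d\theta)$, and for $\zeta\in\{\Phi,1\}$ set $X^\zeta_t:=\int_{(0,t)\times\mathbb{R}_+}\zeta(t-s)\mathbf 1_{\{\theta\le\lambda_s\}}N(ds,d\theta)$. For $x_1,\dots,x_n$ with $t_1<\dots<t_n$ and a functional $F$ of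 $\omega$, $\mathcal D^n_{(x_1,\dots,x_n)}F:=\sum_{J\subset\{x_1,\dots,x_n\}}(-1)^{n-|J|}F(\sum_{y\in J}\delta_y)$. Define $c_n^{\zeta,t}(x_1,\dots,x_n):=\mathcal D^n_{(x_{(1)},\dots,x_{(n)})}X^\zeta_t$, where $(x_{(1)},\dots,x_{(n)})$ is the reordering by increasing time coordinate. *)

From HB Require Import structures.
From mathcomp Require Import all_boot all_order all_algebra.
From mathcomp Require Import all_classical all_reals all_analysis.
Set Implicit Arguments. Unset Strict Implicit. Unset Printing Implicit Defensive.
Import Order.TTheory GRing.Theory Num.Theory.
Local Open Scope ring_scope.

(* A (finite) configuration omega = sum_i delta_{x_i} on X = R_+ x R_+ is
   represented by the sequence of its atoms x_i = (t_i, theta_i). *)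
Definition config (R : realType) := seq (R * R).

(* Integral of a function g against the counting measure N(omega) over
   (0,t) x R_+ : sum over the atoms (s,theta) with 0 < s < t and theta >= 0. *)
Definition Nint (R : realType) (omega : config R) (t : R)
  (g : R -> R -> R) : R :=
  \sum_(p <- omega | (0 < p.1 < t) && (0 <= p.2)) g p.1 p.2.

Definition is_intensity (R : realType) (mu : R) (Phi : R -> R)
  (lam : config R -> R -> R) : Prop :=
  forall (omega : config R) (t : R),
    lam omega t = mu + Nint omega t
      (fun s theta => Phi (t - s) * (nat_of_bool (theta <= lam omega s)%R)%:R).

Definition Xzeta (R : realType) (lam : config R -> R -> R) (zeta : R -> R)
  (t : R) (omega : config R) : R :=
  Nint omega t (fun s theta => zeta (t - s) * (nat_of_bool (theta <= lam omega s)%R)%:R).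

Definition Dn (R : realType) (n : nat) (F : config R -> R)
  (x : 'I_n -> R * R) : R :=
  \sum_(J : {set 'I_n}) (-1) ^+ (n - #|J|) * F [seq x i | i <- enum J].

(* c_n^{zeta,t}(x_1..x_n) for x already ordered by increasing time
   (so the reordering x_(1),...,x_(n) is the identity). *)
Definition cn (R : realType) (lam : config R -> R -> R) (zeta : R -> R)
  (t : R) (n : nat) (x : 'I_n -> R * R) : R :=
  Dn (Xzeta lam zeta t) x.

From HB Require Import structures.
From mathcomp Require Import all_boot all_order all_algebra.
From mathcomp Require Import all_classical all_reals all_analysis.

Set Implicit Arguments.
Unset Strict Implicit.
Unset Printing Implicit Defensive.
Import Order.TTheory GRing.Theory Num.Theory.
Local Open Scope ring_scope.

(* If the atom x_i is rejected in the full configuration, i.e. theta_i exceeds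
   mu + sum_(j < i) Phi(t_i - t_j), it is rejected in every sub-configuration,
   because the intensity there is bounded by that sum.  A rejected atom changes
   neither lam nor X^zeta, so pairing J with J \ {x_i} in the inclusion-exclusion
   sum defining c_n makes it vanish. *)

Lemma count_lt_sub (T : eqType) (a1 a2 : pred T) (s : seq T) (y : T) :
  subpred a1 a2 -> y \in s -> a2 y -> ~~ a1 y -> (count a1 s < count a2 s)%N.
Proof.
move=> sub12 + a2y na1y; elim: s => //= z s IHs.
rewrite in_cons => /orP[/eqP<- | ys].
  by rewrite a2y (negbTE na1y) add0n add1n ltnS sub_count.
by rewrite -addnS leq_add ?IHs //; case: (a1 z) (sub12 z) => // ->.
Qed.

Lemma perm_enum_setD1 (T : finType) (J : {set T}) (i : T) :
  i \in J -> perm_eq (enum J) (i :: enum (J :\ i)).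
Proof.
move=> iJ; apply: uniq_perm; first exact: enum_uniq.
  by rewrite /= mem_enum setD11 enum_uniq.
by move=> k; rewrite in_cons !mem_enum in_setD1; case: eqP => [->|].
Qed.

Lemma alternating_sum_eq0 (R : numDomainType) (T : finType)
    (F : {set T} -> R) (i : T) :
  (forall J : {set T}, i \in J -> F J = F (J :\ i)) ->
  \sum_(J : {set T}) (-1) ^+ (#|T| - #|J|) * F J = 0.
Proof.
move=> FD1.
pose tog (J : {set T}) := if i \in J then J :\ i else i |: J.
have togK : involutive tog.
  move=> J; rewrite /tog; case iJ: (i \in J).
    by rewrite setD11 finset.setD1K.
  by rewrite setU11 finset.setU1K ?iJ.
have signD1 (J : {set T}) :
    i \in J -> (-1) ^+ (#|T| - #|J :\ i|) = - (-1) ^+ (#|T| - #|J|) :> R.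
  move=> iJ; have := max_card J; rewrite (cardsD1 i J) iJ add1n => ltJ.
  by rewrite -(subnSK ltJ) exprS mulN1r.
set S := \sum_(J : {set T}) _.
suff : - S == S by rewrite eqNr => /eqP.
apply/eqP; rewrite -sumrN /S (reindex_inj (inv_inj togK)); apply: eq_bigr => J _.
rewrite /tog; case iJ: (i \in J); first by rewrite signD1 // -FD1 // mulNr opprK.
have iUJ : i \in i |: J by rewrite setU11.
by rewrite -[in RHS](finset.setU1K (negbT iJ)) -FD1 // signD1 // mulNr.
Qed.

Lemma Dn_eq0 (R : realType) (n : nat) (F : config R -> R)
    (x : 'I_n -> R * R) (i : 'I_n) :
  (forall J : {set 'I_n}, i \in J ->
     F [seq x k | k <- enum J] = F [seq x k | k <- enum (J :\ i)]) ->
  Dn F x = 0.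
Proof.
move=> FD1; have := alternating_sum_eq0 (F := fun J => F [seq x k | k <- enum J]) FD1.
by rewrite card_ord.
Qed.

Section Intensity.
Variables (R : realType) (mu : R) (Phi : R -> R) (lam : config R -> R -> R).
Hypothesis lamE : is_intensity mu Phi lam.

(* Induction on the number of atoms strictly before [s]: lam at [s] only
   depends on lam at earlier atoms. *)
Lemma intensity_drop_rejected (w w' : config R) (a : R * R) :
  perm_eq w (a :: w') -> lam w a.1 < a.2 -> lam w =1 lam w'.
Proof.
move=> w_perm a_rej.
suff lamP (k : nat) (s : R) :
    (count (fun p : R * R => (p.1 < s)%R) w < k)%N -> lam w s = lam w' s.
  by move=> s; exact: (lamP _ s (ltnSn _)).
elim: k s => // k IHk s ltk; rewrite !lamE; congr (_ + _).
rewrite /Nint (perm_big _ w_perm) big_cons /= (lt_geF a_rej) mulr0 add0r if_same.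
rewrite big_seq_cond [RHS]big_seq_cond; apply: eq_bigr => p.
case/andP=> pw' /andP[/andP[_ lt_ps] _]; rewrite IHk //.
have pw : p \in w by rewrite (perm_mem w_perm) in_cons pw' orbT.
have lt_count : (count (fun q : R * R => (q.1 < p.1)%R) w
                   < count (fun q : R * R => (q.1 < s)%R) w)%N.
  apply: (count_lt_sub _ pw) => [q /= lt_qp | // | ]; first exact: lt_trans lt_ps.
  by rewrite /= ltxx.
by apply: leq_trans lt_count _; rewrite -ltnS.
Qed.

Lemma Xzeta_drop_rejected (zeta : R -> R) (t : R) (w w' : config R) (a : R * R) :
  perm_eq w (a :: w') -> lam w a.1 < a.2 -> Xzeta lam zeta t w = Xzeta lam zeta t w'.
Proof.
move=> w_perm a_rej; rewrite /Xzeta /Nint (perm_big _ w_perm) big_cons /=.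
rewrite (lt_geF a_rej) mulr0 add0r if_same; apply: eq_bigr => p _.
by rewrite (intensity_drop_rejected w_perm a_rej).
Qed.

Hypothesis Phi_ge0 : forall s, 0 <= s -> 0 <= Phi s.

Lemma intensity_le_sum (w : config R) (s : R) :
  lam w s <= mu + \sum_(p <- w | p.1 < s) Phi (s - p.1).
Proof.
rewrite lamE lerD2l /Nint big_mkcond [X in _ <= X]big_mkcond /=.
apply: ler_sum => p _.
have Phi_p_ge0 : p.1 < s -> 0 <= Phi (s - p.1) by move=> lt_ps; rewrite Phi_ge0 ?subr_ge0 ?ltW.
case: ifP => [/andP[/andP[_ lt_ps] _] | _]; last by case: ifP => // /Phi_p_ge0.
by rewrite lt_ps; case: (p.2 <= _); rewrite ?mulr1 ?mulr0 ?Phi_p_ge0.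
Qed.

End Intensity.

Theorem lemma5p1 (R : realType) (mu : R) (Phi : R -> R)
  (lam : config R -> R -> R) (zeta : R -> R) (t : R) (n : nat)
  (x : 'I_n -> R * R) :
  0 < mu ->
  (forall s, 0 <= s -> 0 <= Phi s) ->
  (lebesgue_measure : set R -> \bar R).-integrable
     `[0%R, +oo[%classic (fun s => (Phi s)%:E) ->
  (\int[lebesgue_measure]_(s in `[0%R, +oo[%classic) (Phi s)%:E < 1%:E)%E ->
  is_intensity mu Phi lam ->
  (zeta = Phi \/ zeta = (fun _ => 1)) ->
  0 <= t -> (0 < n)%N ->
  (forall i j : 'I_n, (i < j)%N -> (x i).1 < (x j).1) ->
  (forall i : 'I_n, 0 < (x i).1 <= t /\ 0 <= (x i).2) ->
  cn lam zeta t x =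
    cn lam zeta t x *
    \prod_(i < n)
      (nat_of_bool ((x i).2 <= mu + \sum_(j < n | (j < i)%N) Phi ((x i).1 - (x j).1))%R)%:R.
Proof.
move=> _ Phi_ge0 _ _ lamE _ _ _ x_incr _.
case: (boolP [exists i : 'I_n,
  ~~ ((x i).2 <= mu + \sum_(j < n | (j < i)%N) Phi ((x i).1 - (x j).1))]);
  last by move/existsPn=> all_acc; rewrite big1 ?mulr1 // => i _; rewrite (negbNE (all_acc i)).
case/existsP=> i; rewrite -ltNge => rej_i.
suff -> : cn lam zeta t x = 0 by rewrite mul0r.
have time_lt k : ((x k).1 < (x i).1) = (k < i)%N.
  case: (ltngtP k i) => [ki | ik | /val_inj->]; last exact: ltxx.
  - exact: x_incr.
  - by rewrite lt_gtF ?x_incr.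
have rejected (J : {set 'I_n}) : lam [seq x k | k <- enum J] (x i).1 < (x i).2.
  apply: le_lt_trans (intensity_le_sum lamE Phi_ge0 _ _) _; apply: le_lt_trans rej_i.
  rewrite lerD2l big_map big_enum_cond big_mkcond [X in _ <= X]big_mkcond /=.
  apply: ler_sum => k _; rewrite time_lt.
  case: (boolP (k < i)%N) => ki; rewrite ?andbF ?andbT //.
  by case: (k \in J) => //; rewrite Phi_ge0 // subr_ge0 ltW ?time_lt.
apply: (Dn_eq0 (i := i)) => J iJ.
have perm_J : perm_eq [seq x k | k <- enum J] (x i :: [seq x k | k <- enum (J :\ i)]).
  by rewrite -map_cons perm_map ?perm_enum_setD1.
by apply: (Xzeta_drop_rejected lamE zeta t perm_J); exact: rejected.
Qed.
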